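(* Let $\mathcal N=(\mathcal S,\mathcal C,\mathcal R)$ be a chemical reaction network, $k\in\mathbb R^r_{>0}$, and $\mathcal M=(\mathcal S,\mathcal C,\mathcal R,k)$ the associated mass action system. Let $\tilde{\mathcal N}=(\mathcal S,\tilde{\mathcal C},\mathcal{CR}_K,\tilde{\mathcal R})$ be an improper translation of $\mathcal N$ which is strongly resolvable and has structural deficiency $\tilde\delta=0$, and let $\tilde{\mathcal M}=(\mathcal S,\tilde{\mathcal C},\mathcal{CR}_K,\tilde{\mathcal R},\tilde k)$ be the improperly translated mass action system. Then the (positive) steady states of the system governing $\tilde{\mathcal M}$ coincide with those of the system governing $\mathcal M$.
   Context: A chemical reaction network $\mathcal N=(\mathcal S,\mathcal C,\mathcal R)$ consists of species $\mathcal A_1,\dots,\mathcal A_m$, pairwise distinct complexes $\mathcal C_1,\dots,\mathcal C_n$ with stoichiometric vectors $y_1,\dots,y_n\in\mathbb Z^m_{\ge 0}$, and reactions $\mathcal R_1,\dots,\mathcal R_r$, where $\mathcal R_i$ is $\mathcal C_{\rho(i)}\to\mathcal C_{\rho'(i)}$ with $\rho(i)\neq\rho'(i)$; every species appears in some complex and every complex in some reaction. Complexes and reactions are identified with their indices; $\mathcal{CR}=\{\rho(i)\}$ is the reactant complex set; $\mathbf x^{y}=\prod_j x_j^{y_j}$. The mass action system $\mathcal M=(\mathcal S,\mathcal C,\mathcal R,k)$ is $\dot{\mathbf x}=\sum_{i}k_i(y_{\rho'(i)}-y_{\rho(i)})\mathbf x^{y_{\rho(i)}}$ on $\mathbb R^m_{>0}$;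 steady states are taken in $\mathbb R^m_{>0}$. Linkage classes are connected components of the underlying undirected reaction graph; weakly reversible means every reaction $\mathcal C_a\to\mathcal C_b$ admits a directed path from $\mathcal C_b$ back to $\mathcal C_a$. A translation $\tilde{\mathcal N}=(\mathcal S,\tilde{\mathcal C},\mathcal{CR}_K,\tilde{\mathcal R})$ of $\mathcal N$: $(\mathcal S,\tilde{\mathcal C},\tilde{\mathcal R})$ is a chemical reaction network with complexes $\tilde{\mathcal C}_1,\dots,\tilde{\mathcal C}_{\tilde n}$ (vectors $\tilde y_j$), reactions $\tilde{\mathcal R}_l:\tilde{\mathcal C}_{\tilde\rho(l)}\to\tilde{\mathcal C}_{\tilde\rho'(l)}$, reactant complex set $\tilde{\mathcal{CR}}$, and $\mathcal{CR}_K\subseteq\mathcal{CR}$, such that (1) there is a bijection $h_1:\mathcal R\to\tilde{\mathcal R}$ preserving reaction vectors: $\tilde y_{\tilde\rho'(h_1(i))}-\tilde y_{\tilde\rho(h_1(i))}=y_{\rho'(i)}-y_{\rho(i)}$; (2) there is a surjection $h_2:\mathcal{CR}\to\tilde{\mathcal{CR}}$ with $h_2(\rho(i))=\tilde\rho(h_1(i))$; (3) for each $j\in\tilde{\mathcal{CR}}$, $\mathcal{CR}_K$ contains exactly one element $\kappa(j)$ of $h_2^{-1}(j)$, the kinetic complex of $\tilde{\mathcal C}_j$ (non-reactant complexes get arbitrary kinetic complexes in $\mathcal{CR}_K$). It is improper if $h_2$ is not injective, strong if $\tilde{\mathcal N}$ is weakly reversible. Kinetic-order subspace: $\tilde S=\mathrm{span}\{y_{\kappa(\tilde\rho'(l))}-y_{\kappa(\tilde\rho(l))}\}$.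 Structural deficiency: $\tilde\delta=\dim(\ker\tilde Y\cap\mathrm{Im}\,\tilde I_a)$, where $\tilde Y$ has columns $\tilde y_j$ and $\tilde I_a\in\mathbb Z^{\tilde n\times r}$ has, in the column of reaction $\tilde{\mathcal R}_l$, entry $-1$ in row $\tilde\rho(l)$, $+1$ in row $\tilde\rho'(l)$, and $0$ elsewhere. Improper reactions: $\mathcal R_I=\{i:\rho(i)\in\mathcal{CR}\setminus\mathcal{CR}_K\}$; $\rho(i)_K$ is the unique element of $h_2^{-1}(h_2(\rho(i)))\cap\mathcal{CR}_K$. $\tilde S_I=\mathrm{span}\{y_{\rho(i)}-y_{\rho(i)_K}:i\in\mathcal R_I\}$. Weakly resolvable: $\tilde{\mathcal N}$ strong and $\tilde S_I\subseteq\tilde S$. In that case fix a basis $\{y_{p_j}-y_{q_j}\}_{j=1}^{\tilde s}$ of $\tilde S$ with $p_j,q_j\in\mathcal{CR}_K$ and $h_2(p_j),h_2(q_j)$ in the same linkage class of $\tilde{\mathcal N}$, and for $i\in\mathcal R_I$ let $c^{(i)}_j$ be the coordinates: $y_{\rho(i)}-y_{\rho(i)_K}=\sum_j c^{(i)}_j(y_{p_j}-y_{q_j})$. Tree constants: for a weakly reversible directed graph with edge weights, a spanning $a$-tree is a subgraph spanning the linkage class of vertex $a$, with no cycles, and with $a$ as unique sink; the tree constant of $a$ is the sum over spanning $a$-trees of the product of their edge weights. The semi-proper reaction graph of $\tilde{\mathcal N}$ is its reaction graph with edge $h_1(i)$ weighted $k_i$ if $i\notin\mathcal R_I$ and by an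 indeterminate positive $\tilde k_i$ if $i\in\mathcal R_I$; let $\tilde K_a$ be its tree constants (polynomials in these weights). The strong kinetic adjustment factor of $i\in\mathcal R_I$ is $\tilde K_{\rho(i),\rho(i)_K}=\prod_j(\tilde K_{h_2(p_j)}/\tilde K_{h_2(q_j)})^{c^{(i)}_j}$. $\tilde{\mathcal N}$ is strongly resolvable if it is weakly resolvable and, for every $i\in\mathcal R_I$, $\tilde K_{\rho(i),\rho(i)_K}$ does not depend on any $\tilde k_{j}$, $j\in\mathcal R_I$. The improperly translated mass action system $\tilde{\mathcal M}$ is the generalized mass action system $\dot{\mathbf x}=\sum_l\tilde k_l(\tilde y_{\tilde\rho'(l)}-\tilde y_{\tilde\rho(l)})\mathbf x^{y_{\kappa(\tilde\rho(l))}}$ with rate constants $\tilde k_{h_1(i)}=k_i$ for $i\notin\mathcal R_I$ and $\tilde k_{h_1(i)}=\tilde K_{\rho(i),\rho(i)_K}\,k_i$ for $i\in\mathcal R_I$. *)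

From HB Require Import structures.
From mathcomp Require Import all_boot all_order all_algebra.
From mathcomp Require Import reals exp.
Set Implicit Arguments. Unset Strict Implicit. Unset Printing Implicit Defensive.
Import Order.TTheory GRing.Theory Num.Theory.
Local Open Scope ring_scope.

Record crn (m : nat) := CRN {
  n_cx : nat;
  n_rx : nat;
  cplx : 'I_n_cx -> 'I_m -> nat;
  src : 'I_n_rx -> 'I_n_cx;
  tgt : 'I_n_rx -> 'I_n_cx }.
Arguments n_cx {m}. Arguments n_rx {m}. Arguments cplx {m}.
Arguments src {m}. Arguments tgt {m}.

Definition is_crn m (N : crn m) : Prop :=
  [/\ (forall i, src N i != tgt N i),
      injective (cplx N),
      (forall s : 'I_m, exists c, cplx N c s != 0%N) &
      (forall c, exists i, src N i = c \/ tgt N i = c)].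

Definition reactants m (N : crn m) : {set 'I_(n_cx N)} := [set src N i | i in 'I_(n_rx N)].

Arguments reactants {m} N.

Definition ulink m (N : crn m) : rel 'I_(n_cx N) := fun u v =>
  [exists l, ((src N l == u) && (tgt N l == v)) || ((src N l == v) && (tgt N l == u))].
Arguments ulink {m} N.
Definition linked m (N : crn m) (u v : 'I_(n_cx N)) : bool := connect (ulink N) u v.
Definition dlink m (N : crn m) : rel 'I_(n_cx N) := fun u v =>
  [exists l, (src N l == u) && (tgt N l == v)].
Arguments dlink {m} N.
Definition weakly_reversible m (N : crn m) : Prop :=
  forall l, connect (dlink N) (tgt N l) (src N l).

(* spanning a-tree (edge set E), written as an in-arborescence rooted at a:
   edges lie in the linkage class of a, a is the unique sink (no out-edge at a,
   exactly one out-edge at every other vertex of the class), and every vertex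
   of the class reaches a along E (no cycles). *)
Definition Erel m (N : crn m) (E : {set 'I_(n_rx N)}) : rel 'I_(n_cx N) := fun u v =>
  [exists l in E, (src N l == u) && (tgt N l == v)].
Definition is_tree m (N : crn m) (a : 'I_(n_cx N)) (E : {set 'I_(n_rx N)}) : bool :=
  [&& [forall l in E, linked (src N l) a && (src N l != a)],
      [forall v, (linked v a && (v != a)) ==> (#|[set l in E | src N l == v]| == 1%N)] &
      [forall v, linked v a ==> connect (Erel E) v a]].

Record translation m (N : crn m) := Translation {
  tN : crn m;
  h1 : 'I_(n_rx N) -> 'I_(n_rx tN);
  h2 : 'I_(n_cx N) -> 'I_(n_cx tN);
  CRK : {set 'I_(n_cx N)};
  kappa : 'I_(n_cx tN) -> 'I_(n_cx N) }.
Arguments tN {m N}. Arguments h1 {m N}. Arguments h2 {m N}.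
Arguments CRK {m N}. Arguments kappa {m N}.

Definition is_translation m (N : crn m) (T : translation N) : Prop :=
  is_crn (tN T) /\
  [/\
      bijective (h1 T),
      (forall i (j : 'I_m), (cplx (tN T) (tgt (tN T) (h1 T i)) j)%:Z
                            - (cplx (tN T) (src (tN T) (h1 T i)) j)%:Z
                          = (cplx N (tgt N i) j)%:Z - (cplx N (src N i) j)%:Z),
      (* (2) h2 on reactant complexes, compatible with h1 (surjectivity onto
         the tilde reactant set follows from bijectivity of h1) *)
      (forall i, h2 T (src N i) = src (tN T) (h1 T i)),
      (CRK T \subset reactants N) /\
      (forall j, j \in reactants (tN T) ->
         #|[set c in CRK T | h2 T c == j]| = 1%N) &
      (forall j, kappa T j \in CRK T) /\
      (forall j, j \in reactants (tN T) -> h2 T (kappa T j) = j)].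

Definition improper m (N : crn m) (T : translation N) : Prop :=
  exists c1 c2, [/\ c1 \in reactants N, c2 \in reactants N, c1 != c2 & h2 T c1 = h2 T c2].

Definition strong m (N : crn m) (T : translation N) : Prop := weakly_reversible (tN T).

Definition RI m (N : crn m) (T : translation N) : {set 'I_(n_rx N)} :=
  [set i | src N i \notin CRK T].
Definition srcK m (N : crn m) (T : translation N) (i : 'I_(n_rx N)) : 'I_(n_cx N) :=
  kappa T (h2 T (src N i)).

Section Real.
Variable R : realType.

Definition yvec m (N : crn m) (a : 'I_(n_cx N)) : 'rV[R]_m := \row_j (cplx N a j)%:R.

Arguments yvec {m} N a.

(* kinetic-order subspace (rows spanning S~) *)
Definition kin_mx m (N : crn m) (T : translation N) : 'M[R]_(n_rx (tN T), m) :=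
  \matrix_(l, j) ((cplx N (kappa T (tgt (tN T) l)) j)%:R - (cplx N (kappa T (src (tN T) l)) j)%:R).
(* rows spanning S~_I (zero rows for proper reactions) *)
Definition SI_mx m (N : crn m) (T : translation N) : 'M[R]_(n_rx N, m) :=
  \matrix_(i, j) (if i \in RI T then (cplx N (src N i) j)%:R - (cplx N (srcK T i) j)%:R else 0).

(* structural deficiency dim(ker Y~ /\ Im I~_a) *)
Definition Ymx m (G : crn m) : 'M[R]_(m, n_cx G) := \matrix_(j, a) (cplx G a j)%:R.
Definition Iamx m (G : crn m) : 'M[R]_(n_cx G, n_rx G) :=
  \matrix_(a, l) ((a == tgt G l)%:R - (a == src G l)%:R).
Definition struct_deficiency m (N : crn m) (T : translation N) : nat :=
  \rank (kermx (Ymx (tN T))^T :&: (Iamx (tN T))^T)%MS.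

Definition weakly_resolvable m (N : crn m) (T : translation N) : Prop :=
  strong T /\ (SI_mx T <= kin_mx T)%MS.

Definition basis_mx m (N : crn m) s (p q : 'I_s -> 'I_(n_cx N)) : 'M[R]_(s, m) :=
  \matrix_(j0, j) ((cplx N (p j0) j)%:R - (cplx N (q j0) j)%:R).
Definition basis_ok m (N : crn m) (T : translation N) s (p q : 'I_s -> 'I_(n_cx N)) : Prop :=
  [/\ row_free (basis_mx p q), (basis_mx p q == kin_mx T)%MS,
      (forall j, p j \in CRK T /\ q j \in CRK T) &
      (forall j, linked (h2 T (p j)) (h2 T (q j)))].
Definition coords_ok m (N : crn m) (T : translation N) s (p q : 'I_s -> 'I_(n_cx N))
    (c : 'I_(n_rx N) -> 'I_s -> R) : Prop :=
  forall i, i \in RI T ->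
    yvec N (src N i) - yvec N (srcK T i) = \sum_j c i j *: (yvec N (p j) - yvec N (q j)).

Definition treeK m (N : crn m) (T : translation N) (w : 'I_(n_rx N) -> R)
    (a : 'I_(n_cx (tN T))) : R :=
  \sum_(E : {set 'I_(n_rx (tN T))} | is_tree a E) \prod_(i | h1 T i \in E) w i.

Arguments treeK {m N} T w a.

(* weightings of the semi-proper reaction graph: k_i on proper reactions,
   arbitrary positive values (the indeterminates) on improper ones *)
Definition semi_weights m (N : crn m) (T : translation N) (k w : 'I_(n_rx N) -> R) : Prop :=
  forall i, (i \notin RI T -> w i = k i) /\ 0 < w i.

Definition adj m (N : crn m) (T : translation N) s (p q : 'I_s -> 'I_(n_cx N))
    (c : 'I_(n_rx N) -> 'I_s -> R) (w : 'I_(n_rx N) -> R) (i : 'I_(n_rx N)) : R :=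
  \prod_(j < s) powR (treeK T w (h2 T (p j)) / treeK T w (h2 T (q j))) (c i j).

Arguments adj {m N} T {s} p q c w i.
Definition strongly_resolvable m (N : crn m) (T : translation N) (k : 'I_(n_rx N) -> R)
    s (p q : 'I_s -> 'I_(n_cx N)) (c : 'I_(n_rx N) -> 'I_s -> R) : Prop :=
  weakly_resolvable T /\
  forall i, i \in RI T -> forall w1 w2, semi_weights T k w1 -> semi_weights T k w2 ->
    adj T p q c w1 i = adj T p q c w2 i.

Definition monom m (x : 'I_m -> R) (y : 'I_m -> nat) : R := \prod_j x j ^+ y j.

Definition ma_rhs m (N : crn m) (k : 'I_(n_rx N) -> R) (x : 'I_m -> R) : 'rV[R]_m :=
  \sum_i (k i * monom x (cplx N (src N i))) *: (yvec N (tgt N i) - yvec N (src N i)).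

Arguments ma_rhs {m} N k x.

Definition ktil m (N : crn m) (T : translation N) (k : 'I_(n_rx N) -> R)
    s (p q : 'I_s -> 'I_(n_cx N)) (c : 'I_(n_rx N) -> 'I_s -> R) (i : 'I_(n_rx N)) : R :=
  if i \in RI T then adj T p q c k i * k i else k i.
Arguments ktil {m N} T k {s} p q c i.
(* (the adjustment factor does not depend on the indeterminates under strong
   resolvability, so it is evaluated at the weighting w = k) *)

Definition itma_rhs m (N : crn m) (T : translation N) (k : 'I_(n_rx N) -> R)
    s (p q : 'I_s -> 'I_(n_cx N)) (c : 'I_(n_rx N) -> 'I_s -> R) (x : 'I_m -> R) : 'rV[R]_m :=
  \sum_i (ktil T k p q c i * monom x (cplx N (kappa T (src (tN T) (h1 T i))))) *:
     (yvec (tN T) (tgt (tN T) (h1 T i)) - yvec (tN T) (src (tN T) (h1 T i))).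

Arguments itma_rhs {m N} T k {s} p q c x.
End Real.

Arguments yvec {R m} N a.
Arguments ma_rhs {R m} N k x.
Arguments treeK {R m N} T w a.
Arguments adj {R m N} T {s} p q c w i.
Arguments ktil {R m N} T k {s} p q c i.
Arguments itma_rhs {R m N} T k {s} p q c x.

From HB Require Import structures.
From mathcomp Require Import all_boot all_order all_algebra.
From mathcomp Require Import reals exp sequences.
From mathcomp Require Import ring.
Set Implicit Arguments. Unset Strict Implicit. Unset Printing Implicit Defensive.
Import Order.TTheory GRing.Theory Num.Theory.
Local Open Scope ring_scope.

(* At a positive steady state [x] of either system, weight the translated
   reaction graph by [W]: [k i] times the monomial ratio
   [x^(y_rho(i)) / x^(y_rho(i)_K)] for [M], the rates [ktil] for [M~]. Then [x]
   is a steady state of the generalized mass action system on the translated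
   graph with weights [W] and kinetic monomials [x^(y_kappa)]. Deficiency zero
   makes this steady state complex balanced, and a complex balanced state is
   proportional on each linkage class to the tree constants of the weighted
   graph (Kirchhoff's matrix-tree identity and a maximum principle). Hence
   [K_(h2 p_j) / K_(h2 q_j) = x^(y_(p_j)) / x^(y_(q_j))], and the coordinates
   [c^(i)] turn the adjustment factor into the monomial ratio of reaction [i].
   Strong resolvability makes the factor evaluated at [W] equal the one at [k],
   so the rates [ktil i * x^(y_rho(i)_K)] of [M~] coincide with the rates
   [k i * x^(y_rho(i))] of [M] and both vector fields agree at [x]. *)

Lemma connect_last_step (T : finType) (e : rel T) x y :
  connect e x y -> x != y -> exists2 u, connect e x u & e u y.
Proof.
case/connectP => p; elim/last_ind: p => [|p z _] /=; first by move=> _ ->; rewrite eqxx.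
rewrite rcons_path last_rcons => /andP[pp ez] -> _.
by exists (last x p) => //; apply/connectP; exists p.
Qed.

Lemma connect_cross (T : finType) (e : rel T) (S : pred T) x y :
  connect e x y -> ~~ S x -> S y -> exists u v, [/\ e u v, ~~ S u & S v].
Proof.
case/connectP => p; elim: p x => [|z p IH] x /=; first by move=> _ -> /negbTE ->.
case/andP => exz pz ly nSx Sy; case Sz: (S z); first by exists x, z.
by apply: (IH z pz ly) => //; rewrite Sz.
Qed.

Lemma connect_backward (T : finType) (e : rel T) (P : pred T) x y :
  (forall u v, e u v -> P v -> P u) -> connect e x y -> P y -> P x.
Proof.
move=> eP /connectP[p]; elim: p x => [|z p IH] x /=; first by move=> _ ->.
by case/andP => exz pz ly Py; apply: eP exz _; apply: IH.
Qed.

(* Compare the first hitting times of [u1] and [u2] in the orbit of [a]. *)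
Lemma fconnect_preimage_uniq (T : finType) (f : T -> T) a u1 u2 :
  fconnect f a u1 -> fconnect f a u2 -> f u1 = a -> f u2 = a -> u1 = u2.
Proof.
have hit u : fconnect f a u -> exists n, iter n f a == u.
  by move=> au; exists (findex f a u); rewrite iter_findex.
have first_hit_le n n' u u' : iter n f a = u -> f u = a ->
    (forall k, iter k f a == u' -> (n' <= k)%N) -> iter n' f a = u' -> (n' <= n)%N.
  move=> hu fu min' hu'; rewrite leqNgt; apply/negP => lt.
  have : iter (n' - n.+1) f a = u' by rewrite -hu' -{2}(subnK lt) iterD /= hu fu.
  by move/eqP/min'; rewrite leqNgt ltn_subrL (leq_ltn_trans _ lt).
move=> /hit au1 /hit au2 f1 f2.
case: (ex_minnP au1) => n1 /eqP h1 min1; case: (ex_minnP au2) => n2 /eqP h2 min2.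
suff e12 : n1 = n2 by rewrite -h1 -h2 e12.
by apply/eqP; rewrite eqn_leq (first_hit_le _ _ _ _ h2 f2 min1 h1) (first_hit_le _ _ _ _ h1 f1 min2 h2).
Qed.

Section ReactionGraph.
Variables (m : nat) (G : crn m).
Implicit Types (a u v z : 'I_(n_cx G)) (l : 'I_(n_rx G)) (E F : {set 'I_(n_rx G)}).

Lemma ulink_sym : symmetric (ulink G).
Proof. by move=> u v; apply/existsP/existsP => -[l Hl]; exists l; rewrite orbC. Qed.

Lemma linked_sym u v : linked u v = linked v u.
Proof. exact: (sym_connect_sym ulink_sym). Qed.

Lemma linked_trans v u z : linked u v -> linked v z -> linked u z.
Proof. exact: connect_trans. Qed.

Lemma linked_refl u : linked u u.
Proof. exact: connect0. Qed.

Lemma linked_src_tgt l : linked (src G l) (tgt G l).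
Proof. by apply: connect1; apply/existsP; exists l; rewrite !eqxx. Qed.

Lemma weakly_reversible_connect u v :
  weakly_reversible G -> linked u v -> connect (dlink G) u v.
Proof.
move=> wr; apply: connect_sub => x y /existsP[l /orP[]] /andP[/eqP <- /eqP <-].
  by apply: connect1; apply/existsP; exists l; rewrite !eqxx.
exact: wr.
Qed.

Lemma connect_Erel_subset E F u v :
  E \subset F -> connect (Erel E) u v -> connect (Erel F) u v.
Proof.
move=> sEF; apply: connect_sub => x y /existsP[l /andP[lE exy]].
by apply: connect1; apply/existsP; exists l; rewrite (subsetP sEF _ lE).
Qed.

Lemma path_Erel_setD1 E l u (p : seq 'I_(n_cx G)) :
  path (Erel E) u p -> uniq (u :: p) -> last u p = src G l -> path (Erel (E :\ l)) u p.
Proof.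
elim: p u => [//|v p IH] u /= /andP[euv pp] /andP[up uniqp] lastp.
rewrite IH // andbT.
have u_src : u != src G l by rewrite -lastp; apply: contraNneq up => ->; exact: mem_last.
case/existsP: euv => l' /andP[l'E /andP[/eqP sl' tl']].
apply/existsP; exists l'; rewrite !inE l'E sl' tl' !eqxx !andbT.
by apply: contraNneq u_src => <-; rewrite sl'.
Qed.

(* [l] leaves [src l], so a shortest path to [src l] avoids it. *)
Lemma connect_Erel_setD1 E l v :
  connect (Erel E) v (src G l) -> connect (Erel (E :\ l)) v (src G l).
Proof.
case/connectP => p pp lastp; rewrite lastp; move: lastp.
case: (shortenP pp) => p' pp' up' _ lastp.
by apply/connectP; exists p' => //; apply: path_Erel_setD1 => //; rewrite lastp.
Qed.

Lemma tree_connect z E v : is_tree z E -> linked v z -> connect (Erel E) v z.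
Proof. by case/and3P => _ _ /forallP /(_ v) /implyP. Qed.

Lemma tree_src_notin z E l : is_tree z E -> src G l = z -> l \notin E.
Proof. by case/and3P => /forall_inP T1 _ _ sl; apply/negP => /T1/andP[_]; rewrite sl eqxx. Qed.

(* Spanning [z]-trees are exactly the sets [F :\ l], where [F] picks one
   outgoing edge at each complex of the linkage class of [z], [l] is the edge
   picked at [z], and every complex of the class reaches [z] along [F]. *)
Definition out_functional z F : Prop :=
  (forall l, l \in F -> linked (src G l) z) /\
  (forall v, linked v z -> #|[set l in F | src G l == v]| = 1%N).

Lemma out_functional_src_inj z F l1 l2 :
  out_functional z F -> l1 \in F -> l2 \in F -> src G l1 = src G l2 -> l1 = l2.
Proof.
case=> inF one l1F l2F e; have /eqP/cards1P[l0 Hl0] := one _ (inF _ l1F).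
have : l1 \in [set l in F | src G l == src G l1] by rewrite inE l1F eqxx.
have : l2 \in [set l in F | src G l == src G l1] by rewrite inE l2F e eqxx.
by rewrite Hl0 !inE => /eqP -> /eqP ->.
Qed.

Lemma out_functional_out z F v :
  out_functional z F -> linked v z -> exists2 l, l \in F & src G l = v.
Proof.
case=> _ one /one/eqP/cards1P[l0 Hl0].
have : l0 \in [set l in F | src G l == v] by rewrite Hl0 inE.
by rewrite inE => /andP[? /eqP ?]; exists l0.
Qed.

Lemma out_functional_linked z z' F :
  linked z z' -> out_functional z F -> out_functional z' F.
Proof.
move=> zz' [inF one]; split; first by move=> l /inF /linked_trans; apply.
by move=> v vz'; apply: one; apply: linked_trans vz' _; rewrite linked_sym.
Qed.

Lemma tree_setD1_out_functional z F l :
  l \in F -> src G l = z -> is_tree z (F :\ l) -> out_functional z F.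
Proof.
move=> lF sl /and3P[/forall_inP T1 /forallP T2 _]; split.
  move=> l' l'F; case: (eqVneq l' l) => [->|ne]; first by rewrite sl linked_refl.
  by have /T1/andP[] : l' \in F :\ l by rewrite !inE ne.
move=> v vz; case: (eqVneq v z) => [->|ne].
  apply/eqP/cards1P; exists l; apply/setP => l'; rewrite !inE.
  case: (eqVneq l' l) => [->|ne']; first by rewrite lF sl eqxx.
  apply/negbTE/negP => /andP[l'F /eqP sl'].
  have /T1/andP[_] : l' \in F :\ l by rewrite !inE ne'.
  by rewrite sl' eqxx.
have := T2 v; rewrite vz ne /= => /eqP <-; apply: eq_card => l'; rewrite !inE.
by case: (eqVneq l' l) => [->|//]; rewrite sl eq_sym (negbTE ne) andbF.
Qed.

Lemma tree_setD1_connect z F l :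
  l \in F -> src G l = z -> is_tree z (F :\ l) ->
  forall v, linked v z -> connect (Erel F) v z.
Proof.
by move=> _ _ T v /(tree_connect T); apply: connect_Erel_subset; apply: subsetDl.
Qed.

Lemma out_functional_setD1_tree z F l :
  out_functional z F -> l \in F -> src G l = z ->
  (forall v, linked v z -> connect (Erel F) v z) -> is_tree z (F :\ l).
Proof.
move=> Fz lF sl reach; have [inF one] := Fz; apply/and3P; split.
- apply/forall_inP => l'; rewrite !inE => /andP[ne l'F]; rewrite inF //=.
  apply: contra ne => /eqP e; apply/eqP.
  by apply: (out_functional_src_inj Fz) => //; rewrite e sl.
- apply/forallP => v; apply/implyP => /andP[vz ne].
  rewrite -(one v vz); apply/eqP; apply: eq_card => l'; rewrite !inE.
  case: (eqVneq l' l) => [->|_] /=; last by [].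
  by rewrite sl eq_sym (negbTE ne) andbF.
- apply/forallP => v; apply/implyP => vz; rewrite -sl; apply: connect_Erel_setD1.
  by rewrite sl; apply: reach.
Qed.

(* [F] splits as [l |: (F :\ l)] either with [tgt l = a] and [F :\ l] a
   [src l]-tree, or with [src l = a] and [F :\ l] an [a]-tree; comparing the
   numbers of such splittings gives the balance identity of tree constants. *)
Definition in_cut_edges a F :=
  [set l in F | (tgt G l == a) && is_tree (src G l) (F :\ l)].
Definition out_cut_edges a F :=
  [set l in F | (src G l == a) && is_tree a (F :\ l)].

Lemma out_cut_edges_le1 a F : (#|out_cut_edges a F| <= 1)%N.
Proof.
apply/card_le1_eqP => l1 l2; rewrite !inE.
move=> /andP[l1F /andP[/eqP s1 /and3P[/forall_inP T1 _ _]]] /andP[l2F /andP[/eqP s2 _]].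
case: (eqVneq l1 l2) => // ne.
have /T1/andP[_] : l2 \in F :\ l1 by rewrite !inE l2F eq_sym ne.
by rewrite s2 eqxx.
Qed.

Lemma in_cut_edges_le1 a F : (#|in_cut_edges a F| <= 1)%N.
Proof.
apply/card_le1_eqP => l1 l2; rewrite !inE.
move=> /andP[l1F /andP[/eqP t1 T1]] /andP[l2F /andP[/eqP t2 T2]].
have l1a : linked (src G l1) a by rewrite -t1 linked_src_tgt.
have l2a : linked (src G l2) a by rewrite -t2 linked_src_tgt.
have Fa := out_functional_linked l1a (tree_setD1_out_functional l1F erefl T1).
pose f v := if [pick l in F | src G l == v] is Some l then tgt G l else v.
have fE l : l \in F -> f (src G l) = tgt G l.
  move=> lF; rewrite /f; case: pickP => [l0 /andP[l0F /eqP sl0]|/(_ l)].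
    by rewrite (out_functional_src_inj Fa l0F lF sl0).
  by rewrite lF eqxx.
have fconnect_F u v : connect (Erel F) u v -> fconnect f u v.
  apply: connect_sub => x y /existsP[l /andP[lF /andP[/eqP <- /eqP <-]]].
  by apply: connect1; rewrite /= fE.
have a_l1 : fconnect f a (src G l1).
  by apply/fconnect_F/(tree_setD1_connect l1F erefl T1); rewrite linked_sym.
have a_l2 : fconnect f a (src G l2).
  by apply/fconnect_F/(tree_setD1_connect l2F erefl T2); rewrite linked_sym.
apply: (out_functional_src_inj Fa l2F l1F); apply: fconnect_preimage_uniq a_l2 a_l1 _ _.
  by rewrite fE.
by rewrite fE.
Qed.

Lemma in_cut_edges_eq0 a F :
  (forall l, src G l != tgt G l) -> (in_cut_edges a F == set0) = (out_cut_edges a F == set0).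
Proof.
move=> loopfree; apply/idP/idP; apply: contraTT.
- case/set0Pn => l; rewrite inE => /andP[lF /andP[/eqP sl T]].
  have Fa := tree_setD1_out_functional lF sl T.
  have reach := tree_setD1_connect lF sl T.
  have la : linked (tgt G l) a by rewrite linked_sym -sl linked_src_tgt.
  have la' : tgt G l != a by rewrite -sl eq_sym loopfree.
  have [u tl_u /existsP[l' /andP[l'F /andP[/eqP sl' /eqP tl']]]] :=
    connect_last_step (reach _ la) la'.
  apply/set0Pn; exists l'; rewrite inE l'F tl' eqxx /=.
  have l'a : linked (src G l') a by rewrite -tl' linked_src_tgt.
  apply: out_functional_setD1_tree => //.
    by apply: out_functional_linked Fa; rewrite linked_sym.
  move=> v vl'; apply: connect_trans (reach v (linked_trans vl' l'a)) _.
  rewrite -sl' in tl_u; apply: connect_trans tl_u; apply: connect1.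
  by apply/existsP; exists l; rewrite lF sl !eqxx.
- case/set0Pn => l; rewrite inE => /andP[lF /andP[/eqP tl T]].
  have reach := tree_setD1_connect lF erefl T.
  have la : linked (src G l) a by rewrite -tl linked_src_tgt.
  have Fa := out_functional_linked la (tree_setD1_out_functional lF erefl T).
  have [l0 l0F sl0] := out_functional_out Fa (linked_refl a).
  apply/set0Pn; exists l0; rewrite inE l0F sl0 eqxx /=.
  apply: out_functional_setD1_tree => // v va.
  apply: connect_trans (reach v _) _; first by rewrite (linked_trans va) // linked_sym.
  by apply: connect1; apply/existsP; exists l; rewrite lF tl !eqxx.
Qed.

Lemma card_in_cut_edges a F :
  (forall l, src G l != tgt G l) -> #|in_cut_edges a F| = #|out_cut_edges a F|.
Proof.
move=> loopfree; have in1 := in_cut_edges_le1 a F; have out1 := out_cut_edges_le1 a F.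
have := in_cut_edges_eq0 a F loopfree; rewrite -!cards_eq0.
by case: #|in_cut_edges a F| in1 => [|[]] //; case: #|out_cut_edges a F| out1 => [|[]].
Qed.

Definition partial_tree a (S : {set 'I_(n_cx G)}) E : Prop :=
  [/\ a \in S, {in S, forall v, linked v a},
      {in E, forall l, (src G l \in S) && (src G l != a)},
      {in S, forall v, v != a -> #|[set l in E | src G l == v]| = 1%N} &
      {in S, forall v, connect (Erel E) v a}].

Lemma partial_tree_full a S E :
  partial_tree a S E -> (forall v, linked v a -> v \in S) -> is_tree a E.
Proof.
case=> _ Sa ES one reach full; apply/and3P; split.
- by apply/forall_inP => l /ES /andP[/Sa -> ->].
- by apply/forallP => v; apply/implyP => /andP[/full vS ne]; rewrite one.
- by apply/forallP => v; apply/implyP => /full; apply: reach.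
Qed.

(* Grow along an edge crossing from outside [S] into [S]; weak reversibility
   provides one. *)
Lemma partial_tree_grow a S E v :
  weakly_reversible G -> partial_tree a S E -> linked v a -> v \notin S ->
  exists2 l, src G l \notin S & partial_tree a (src G l |: S) (l |: E).
Proof.
move=> wr [aS Sa ES one reach] va vS.
have [_ [_ [/existsP[l /andP[/eqP <- /eqP <-]] uS tS]]] :=
  connect_cross (S := mem S) (weakly_reversible_connect wr va) vS aS.
have ua : linked (src G l) a by apply: linked_trans (linked_src_tgt l) (Sa _ tS).
have una : src G l != a by apply: contraNneq uS => ->.
have sub : E \subset l |: E by apply: subsetUr.
exists l => //; split.
- by rewrite inE aS orbT.
- by move=> w; rewrite !inE => /orP[/eqP ->|/Sa].
- move=> l'; rewrite !inE => /orP[/eqP ->|/ES/andP[-> ->]]; first by rewrite eqxx una.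
  by rewrite orbT.
- move=> w; rewrite !inE => /orP[/eqP ->|wS] ne.
    apply/eqP/cards1P; exists l; apply/setP => l'; rewrite !inE.
    case: (eqVneq l' l) => [->|ne'] /=; first by rewrite eqxx.
    by apply/negbTE/negP => /andP[/ES/andP[+ _] /eqP sl']; rewrite sl' => /(negP uS).
  rewrite -(one w wS ne); apply: eq_card => l'; rewrite !inE.
  case: (eqVneq l' l) => [->|_] /=; last by [].
  have lw : src G l != w by apply: contraNneq uS => ->.
  by rewrite (negbTE lw) andbF.
- move=> w; rewrite !inE => /orP[/eqP ->|/reach]; last exact: connect_Erel_subset.
  apply: connect_trans (connect_Erel_subset sub (reach _ tS)).
  by apply: connect1; apply/existsP; exists l; rewrite !inE !eqxx.
Qed.

Lemma tree_exists a : weakly_reversible G -> exists E, is_tree a E.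
Proof.
move=> wr; pose missing S := [set v | linked v a] :\: S.
suff grow n S E : #|missing S| = n -> partial_tree a S E -> exists E, is_tree a E.
  apply: (grow _ [set a] set0 erefl); split.
  - by rewrite inE.
  - by move=> v; rewrite inE => /eqP ->; apply: linked_refl.
  - by move=> l; rewrite inE.
  - by move=> v; rewrite inE => ->.
  - by move=> v; rewrite inE => /eqP ->; apply: connect0.
elim: n S E => [|n IH] S E card_n PT.
  exists E; apply: (partial_tree_full PT) => v va; apply: contraT => vS.
  have : v \in missing S by rewrite !inE vS va.
  by rewrite (cards0_eq card_n) inE.
have /set0Pn[v] : missing S != set0 by rewrite -card_gt0 card_n.
rewrite !inE => /andP[vS va]; have [l lS PT'] := partial_tree_grow wr PT va vS.
apply: (IH _ _ _ PT'); have : src G l \in missing S.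
  by rewrite !inE lS; case: PT' => _ /(_ (src G l)); rewrite setU11 => ->.
have -> : missing (src G l |: S) = missing S :\ src G l.
  by apply/setP => w; rewrite !inE negb_or andbA [X in X && _]andbC.
by move=> lmiss; move: card_n; rewrite (cardsD1 (src G l)) lmiss => -[].
Qed.

End ReactionGraph.

(* Pairs [(l, E)] with [l \notin E] correspond to pairs [(F, l)] with
   [l \in F], via [F = l |: E]. *)
Lemma sum_prod_setU1 (R : comPzSemiRingType) (I : finType) (w : I -> R)
    (Q : I -> {set I} -> bool) :
  (forall l E, Q l E -> l \notin E) ->
  \sum_l \sum_(E | Q l E) w l * \prod_(l' in E) w l' =
  \sum_(F : {set I}) (\prod_(l in F) w l) *+ #|[set l in F | Q l (F :\ l)]|.
Proof.
move=> QnotE.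
transitivity (\sum_l \sum_(F : {set I})
    (if (l \in F) && Q l (F :\ l) then \prod_(l' in F) w l' else 0)).
  apply: eq_bigr => l _; rewrite -big_mkcond /=.
  rewrite (reindex_onto (fun F => F :\ l) (fun E => l |: E)) /=; last first.
    by move=> E /QnotE lE; rewrite setU1K.
  apply: eq_big => F.
    case lF: (l \in F); first by rewrite setD1K // eqxx andbT.
    by case: (Q l (F :\ l)) => //=; apply/negbTE/eqP => eF; rewrite -eF setU11 in lF.
  by move=> /andP[_ /eqP eF]; rewrite -{2}eF big_setU1 //= !inE eqxx.
rewrite exchange_big; apply: eq_bigr => F _; rewrite -big_mkcond /=.
by rewrite -sumr_const; apply: eq_bigl => l; rewrite inE.
Qed.

Section TreeConstants.
Variables (R : comPzSemiRingType) (m : nat) (G : crn m).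
Implicit Types (a : 'I_(n_cx G)) (w : 'I_(n_rx G) -> R).

Definition tree_const w a : R := \sum_(E | is_tree a E) \prod_(l in E) w l.

Lemma tree_const_balance w a :
  (forall l, src G l != tgt G l) ->
  \sum_(l | tgt G l == a) w l * tree_const w (src G l) =
  tree_const w a * \sum_(l | src G l == a) w l.
Proof.
move=> loopfree.
have expand (P : pred 'I_(n_rx G)) (root : 'I_(n_rx G) -> 'I_(n_cx G)) :
    \sum_(l | P l) w l * tree_const w (root l) =
    \sum_l \sum_(E | P l && is_tree (root l) E) w l * \prod_(l' in E) w l'.
  rewrite big_mkcond; apply: eq_bigr => l _.
  case: (P l) => /=; first by rewrite /tree_const big_distrr.
  by rewrite big_pred0.
rewrite mulrC big_distrl /=.
rewrite (expand (fun l => tgt G l == a) (src G)).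
rewrite (expand (fun l => src G l == a) (fun=> a)).
rewrite !sum_prod_setU1.
- apply: eq_bigr => F _; congr (_ *+ _).
  exact: (card_in_cut_edges a F loopfree).
- by move=> l E /andP[/eqP sl T]; apply: tree_src_notin T sl.
- by move=> l E /andP[_ T]; apply: tree_src_notin T erefl.
Qed.

End TreeConstants.

Definition complex_balanced (R : comPzSemiRingType) m (G : crn m)
    (w : 'I_(n_rx G) -> R) (Psi : 'I_(n_cx G) -> R) : Prop :=
  forall a, \sum_(l | tgt G l == a) w l * Psi (src G l) = Psi a * \sum_(l | src G l == a) w l.

Section TreeConstantsPositive.
Variables (R : realFieldType) (m : nat) (G : crn m).
Variable w : 'I_(n_rx G) -> R.
Hypotheses (wr : weakly_reversible G) (w_gt0 : forall l, 0 < w l).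

Lemma tree_const_gt0 a : 0 < tree_const w a.
Proof.
have [E0 T0] := tree_exists a wr.
rewrite /tree_const (bigD1 E0) //=; apply: ltr_pwDl; first exact: prodr_gt0.
by apply: sumr_ge0 => E _; apply: prodr_ge0 => l _; apply: ltW.
Qed.

Variable Psi : 'I_(n_cx G) -> R.
Hypotheses (loopfree : forall l, src G l != tgt G l) (Psi_gt0 : forall v, 0 < Psi v).
Hypothesis balanced : complex_balanced w Psi.

Let r v := tree_const w v / Psi v.

Let tree_constE v : tree_const w v = r v * Psi v.
Proof. by rewrite /r divfK // gt_eqF. Qed.

(* Both [Psi] and the tree constants are complex balanced, so at a maximum of
   their ratio the balance equation at [a] is a vanishing sum of nonnegative
   terms [w l * Psi (src l) * (r a - r (src l))]. *)
Lemma tree_ratio_max_in_edge a :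
  (forall v, linked v a -> r v <= r a) -> forall l, tgt G l = a -> r (src G l) = r a.
Proof.
move=> amax.
have sum0 : \sum_(l | tgt G l == a) w l * Psi (src G l) * (r a - r (src G l)) = 0.
  transitivity (r a * \sum_(l | tgt G l == a) w l * Psi (src G l) -
                \sum_(l | tgt G l == a) w l * tree_const w (src G l)).
    by rewrite mulr_sumr -sumrB; apply: eq_bigr => l _; rewrite tree_constE; ring.
  by rewrite tree_const_balance // balanced tree_constE; ring.
have nonneg l : tgt G l == a -> 0 <= w l * Psi (src G l) * (r a - r (src G l)).
  move=> /eqP tl; apply: mulr_ge0; first by rewrite mulr_ge0 ?ltW.
  by rewrite subr_ge0; apply: amax; rewrite -tl linked_src_tgt.
move=> l tl; have /eqP := psumr_eq0P nonneg sum0 (introT eqP tl).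
by rewrite !mulf_eq0 subr_eq0 (gt_eqF (w_gt0 l)) (gt_eqF (Psi_gt0 _)) => /eqP.
Qed.

Lemma complex_balanced_tree_const a b :
  linked a b -> tree_const w a * Psi b = tree_const w b * Psi a.
Proof.
move=> ab.
have [am amL amH] := @arg_maxP _ _ _ a (fun v => linked v a) r (linked_refl a).
have r_am v : linked v a -> r v = r am.
  move=> va; pose P x := linked x a && (r x == r am).
  suff /andP[_ /eqP] : P v by [].
  apply: (connect_backward (e := dlink G) (y := am)) (weakly_reversible_connect wr _) _.
  - move=> u x /existsP[l /andP[/eqP su /eqP tx]] /andP[xa /eqP rx].
    have xmax y : linked y x -> r y <= r x by rewrite rx => yx; apply/amH/(linked_trans yx).
    rewrite /P -su (tree_ratio_max_in_edge xmax tx) rx eqxx andbT.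
    by apply: linked_trans xa; rewrite -tx linked_src_tgt.
  - by apply: linked_trans va _; rewrite linked_sym.
  - by rewrite /P amL eqxx.
rewrite !tree_constE (r_am a (linked_refl a)) (r_am b) 1?linked_sym //; ring.
Qed.

End TreeConstantsPositive.

Section Monomials.
Variables (R : realType) (m : nat) (x : 'I_m -> R).
Hypothesis x_gt0 : forall j, 0 < x j.

Definition ln_col : 'cV[R]_m := \col_j ln (x j).

Lemma monom_gt0 y : 0 < monom x y.
Proof. by apply: prodr_gt0 => j _; apply: exprn_gt0. Qed.

Lemma monomE y : monom x y = expR ((\row_j (y j)%:R *m ln_col) 0 0).
Proof.
rewrite mxE expR_sum; apply: eq_bigr => j _.
by rewrite !mxE expRM_natl lnK // posrE.
Qed.

Lemma monom_yvec_ratio (G : crn m) a b :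
  monom x (cplx G a) / monom x (cplx G b) = expR (((yvec G a - yvec G b) *m ln_col) 0 0).
Proof. by rewrite !monomE -expRB mulmxBl !mxE. Qed.

Lemma expR_ln_col_comb s (u : 'rV[R]_m) (d : 'I_s -> 'rV[R]_m) (c : 'I_s -> R) :
  u = \sum_j c j *: d j ->
  expR ((u *m ln_col) 0 0) = \prod_j expR ((d j *m ln_col) 0 0) `^ c j.
Proof.
move=> ->; rewrite mulmx_suml summxE expR_sum; apply: eq_bigr => j _.
by rewrite -scalemxAl mxE -expRM mulrC.
Qed.

End Monomials.

Section DeficiencyZero.
Variables (R : realType) (m : nat) (G : crn m).

Lemma Iamx_row (v : 'I_(n_rx G) -> R) a :
  (\row_l v l *m (Iamx R G)^T) 0 a =
  \sum_(l | tgt G l == a) v l - \sum_(l | src G l == a) v l.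
Proof.
rewrite mxE !(big_mkcond (fun l => _ == a)) -sumrB; apply: eq_bigr => l _.
by rewrite !mxE mulrBr !(eq_sym a); do 2 case: (_ == _); rewrite ?mulr1 ?mulr0 ?subr0 ?sub0r.
Qed.

Lemma gma_field_mx (v : 'I_(n_rx G) -> R) :
  \sum_l v l *: (yvec G (tgt G l) - yvec G (src G l)) =
  \row_l v l *m (Iamx R G)^T *m (Ymx R G)^T.
Proof.
apply/rowP => j; rewrite summxE -mulmxA !mxE; apply: eq_bigr => l _.
have delta_sum b : \sum_a (a == b)%:R * (cplx G a j)%:R = (cplx G b j)%:R :> R.
  by rewrite (bigD1 b) //= eqxx mul1r big1 ?addr0 // => a /negbTE ->; rewrite mul0r.
rewrite !mxE; congr (_ * _).
by under eq_bigr do rewrite !mxE mulrBl; rewrite sumrB !delta_sum.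
Qed.

Lemma deficiency0_complex_balanced (w : 'I_(n_rx G) -> R) (Psi : 'I_(n_cx G) -> R) :
  \rank (kermx (Ymx R G)^T :&: (Iamx R G)^T)%MS = 0%N ->
  \sum_l (w l * Psi (src G l)) *: (yvec G (tgt G l) - yvec G (src G l)) = 0 ->
  complex_balanced w Psi.
Proof.
move=> /eqP; rewrite mxrank_eq0 => /eqP cap0; rewrite gma_field_mx => field0.
set z := \row_l _ *m _ in field0.
have z0 : z = 0.
  apply/eqP; rewrite -submx0 -cap0 sub_capmx submxMl andbT.
  exact/sub_kermxP.
move=> a; have /eqP := congr1 (fun z : 'rV_(n_cx G) => z 0 a) z0.
rewrite Iamx_row mxE subr_eq0 => /eqP ->.
by rewrite mulr_sumr; apply: eq_bigr => l /eqP <-; rewrite mulrC.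
Qed.

End DeficiencyZero.

Section Translation.
Variables (R : realType) (m : nat) (N : crn m) (T : translation N).
Hypothesis trT : is_translation T.
Local Notation G := (tN T).

Lemma translation_h1_bij : bijective (h1 T).
Proof. by case: trT => _ []. Qed.

Lemma translation_loopfree l : src G l != tgt G l.
Proof. by case: trT => -[]. Qed.

Lemma kappa_h2 c0 : c0 \in CRK T -> kappa T (h2 T c0) = c0.
Proof.
case: trT => _ [_ _ h2_src [CRK_sub CRK_fibre] [kappa_CRK kappa_h2']] c0K.
have c0R : h2 T c0 \in reactants G.
  by have /imsetP[i _ ->] := subsetP CRK_sub _ c0K; rewrite h2_src imset_f.
have /eqP/cards1P[c1 fibre] := CRK_fibre _ c0R.
have : c0 \in [set c' in CRK T | h2 T c' == h2 T c0] by rewrite inE c0K eqxx.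
have : kappa T (h2 T c0) \in [set c' in CRK T | h2 T c' == h2 T c0].
  by rewrite inE kappa_CRK kappa_h2' // eqxx.
by rewrite fibre !inE => /eqP -> /eqP ->.
Qed.

Lemma srcK_h1 i : srcK T i = kappa T (src G (h1 T i)).
Proof. by case: trT => _ [_ _ h2_src _ _]; rewrite /srcK h2_src. Qed.

Lemma srcK_proper i : i \notin RI T -> srcK T i = src N i.
Proof. by rewrite inE negbK; apply: kappa_h2. Qed.

Lemma yvec_h1 i :
  yvec G (tgt G (h1 T i)) - yvec G (src G (h1 T i)) =
  yvec N (tgt N i) - yvec N (src N i) :> 'rV[R]_m.
Proof.
case: trT => _ [_ vec _ _ _]; apply/rowP => j; rewrite !mxE.
by have := congr1 (fun z : int => z%:~R : R) (vec i j); rewrite /= !intrB.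
Qed.

Lemma treeK_h1 (g : 'I_(n_rx G) -> 'I_(n_rx N)) (w : 'I_(n_rx N) -> R) a :
  cancel (h1 T) g -> cancel g (h1 T) -> treeK T w a = tree_const (w \o g) a.
Proof.
move=> h1K gK; apply: eq_bigr => E _.
rewrite [RHS](reindex (h1 T)) /=; last by apply: onW_bij; exists g.
by apply: eq_bigr => i _; rewrite h1K.
Qed.

Variables (x : 'I_m -> R).
Hypothesis x_gt0 : forall j, 0 < x j.

Definition kinetic_field (W : 'I_(n_rx N) -> R) : 'rV[R]_m :=
  \sum_i (W i * monom x (cplx N (srcK T i))) *: (yvec N (tgt N i) - yvec N (src N i)).

Definition monom_ratio i : R := monom x (cplx N (src N i)) / monom x (cplx N (srcK T i)).

Lemma monom_ratio_proper i : i \notin RI T -> monom_ratio i = 1.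
Proof. by move=> iP; rewrite /monom_ratio srcK_proper // divff // gt_eqF // monom_gt0. Qed.

Lemma ma_rhs_kinetic k : ma_rhs N k x = kinetic_field (fun i => k i * monom_ratio i).
Proof.
apply: eq_bigr => i _; congr (_ *: _).
by rewrite /monom_ratio -mulrA divfK // gt_eqF // monom_gt0.
Qed.

Lemma itma_rhs_kinetic k s (p q : 'I_s -> 'I_(n_cx N)) c :
  itma_rhs T k p q c x = kinetic_field (ktil T k p q c).
Proof. by apply: eq_bigr => i _; rewrite yvec_h1 srcK_h1. Qed.

Lemma itma_rhs_ma_rhs k s (p q : 'I_s -> 'I_(n_cx N)) c :
  (forall i, i \in RI T -> adj T p q c k i = monom_ratio i) ->
  itma_rhs T k p q c x = ma_rhs N k x.
Proof.
move=> adjE; rewrite itma_rhs_kinetic ma_rhs_kinetic; apply: eq_bigr => i _.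
rewrite /ktil; case: ifP => iRI; first by rewrite adjE // [monom_ratio i * _]mulrC.
by rewrite monom_ratio_proper ?iRI // mulr1.
Qed.

Variables (s : nat) (p q : 'I_s -> 'I_(n_cx N)) (c : 'I_(n_rx N) -> 'I_s -> R).
Hypotheses (bok : basis_ok R T p q) (cok : coords_ok T p q c).
Hypotheses (wr : weakly_reversible G) (def0 : struct_deficiency R T = 0%N).

Let Psi b := monom x (cplx N (kappa T b)).

Lemma adj_gt0 W i : (forall i, 0 < W i) -> 0 < adj T p q c W i.
Proof.
move=> W_gt0; apply: prodr_gt0 => j _; apply: powR_gt0.
have [g h1K gK] := translation_h1_bij.
have Wg_gt0 l : 0 < (W \o g) l by apply: W_gt0.
by rewrite !(treeK_h1 _ _ h1K gK) divr_gt0 ?tree_const_gt0.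
Qed.

Lemma kinetic_field_eq0_adj W :
  (forall i, 0 < W i) -> kinetic_field W = 0 ->
  forall i, i \in RI T -> adj T p q c W i = monom_ratio i.
Proof.
move=> W_gt0 field0 i iRI.
have [g h1K gK] := translation_h1_bij.
pose w := W \o g.
have w_gt0 l : 0 < w l by apply: W_gt0.
have Psi_gt0 b : 0 < Psi b by apply: monom_gt0.
have balanced : complex_balanced w Psi.
  apply: deficiency0_complex_balanced def0 _.
  rewrite -[RHS]field0 /kinetic_field [LHS](reindex (h1 T)) /=; last by apply: onW_bij; exists g.
  by apply: eq_bigr => i' _; rewrite /w /= h1K yvec_h1 srcK_h1.
have tree_ratio j : treeK T W (h2 T (p j)) / treeK T W (h2 T (q j)) =
    monom x (cplx N (p j)) / monom x (cplx N (q j)).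
  case: bok => _ _ /(_ j)[pK qK] /(_ j) pq.
  rewrite !(treeK_h1 _ _ h1K gK) -{2}(kappa_h2 pK) -{2}(kappa_h2 qK).
  have K_neq0 a : tree_const w a != 0 by rewrite gt_eqF // tree_const_gt0.
  apply/eqP; rewrite eqr_div ?K_neq0 ?(gt_eqF (Psi_gt0 _)) //.
  by rewrite (complex_balanced_tree_const wr w_gt0 translation_loopfree Psi_gt0 balanced pq) mulrC.
rewrite /adj; under eq_bigr do rewrite tree_ratio.
rewrite /monom_ratio !monom_yvec_ratio // (expR_ln_col_comb _ (cok iRI)).
by apply: eq_bigr => j _; rewrite monom_yvec_ratio.
Qed.

End Translation.

Theorem lemma4p3 (R : realType) (m : nat) (N : crn m) (T : translation N)
    (k : 'I_(n_rx N) -> R) (s : nat) (p q : 'I_s -> 'I_(n_cx N))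
    (c : 'I_(n_rx N) -> 'I_s -> R) :
  is_crn N ->
  (forall i, 0 < k i) ->
  is_translation T ->
  improper T ->
  basis_ok R T p q ->
  coords_ok T p q c ->
  strongly_resolvable T k p q c ->
  struct_deficiency R T = 0%N ->
  forall x : 'I_m -> R, (forall j, 0 < x j) ->
    (ma_rhs N k x = 0 <-> itma_rhs T k p q c x = 0).
Proof.
move=> _ k_gt0 trT _ bok cok [[wr _] adj_indep] def0 x x_gt0.
have adj_steady W : semi_weights T k W -> kinetic_field T x W = 0 ->
    forall i, i \in RI T -> adj T p q c k i = monom_ratio T x i.
  move=> W_semi field0 i iRI; have k_semi : semi_weights T k k by [].
  rewrite (adj_indep i iRI k W k_semi W_semi).
  by apply: kinetic_field_eq0_adj => // i'; case: (W_semi i').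
split=> steady.
- rewrite itma_rhs_ma_rhs //.
  apply: (adj_steady (fun i => k i * monom_ratio T x i)); last by rewrite -ma_rhs_kinetic.
  move=> i; split; first by move=> iP; rewrite monom_ratio_proper // mulr1.
  by rewrite mulr_gt0 // divr_gt0 // monom_gt0.
- apply: (etrans _ steady); apply/esym/itma_rhs_ma_rhs => //.
  apply: (adj_steady (ktil T k p q c)); last by rewrite -itma_rhs_kinetic.
  move=> i; rewrite /ktil; case: ifP => // iRI; split=> //.
  by rewrite mulr_gt0 // adj_gt0.
Qed.
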